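(* Let $\mathcal{S}$ be an elementary topos with subobject classifier $\mathit{2}$ (not necessarily Boolean), and let $p : \mathcal{E} \rightarrow \mathcal{S}$ be a pre-cohesive geometric morphism with $p_! \dashv p^* \dashv p_* \dashv p^!$. For every morphism $f : W \rightarrow X$ in $\mathcal{E}$, the following are equivalent: (1) $f$ is internally orthogonal to $p^* \mathit{2}$; (2) $p_! f : p_! W \rightarrow p_! X$ is an isomorphism in $\mathcal{S}$; (3) for every object $A$ of $\mathcal{S}$, $f$ is internally orthogonal to $p^* A$.
   Context: A geometric morphism $p : \mathcal{E} \rightarrow \mathcal{S}$ is pre-cohesive if it is local ($p_*$ has a fully faithful right adjoint $p^!$), hyperconnected (unit and counit of $p^* \dashv p_*$ are monic), and $p^*$ has a finite-product preserving left adjoint $p_!$. A morphism $f : W \rightarrow X$ is internally orthogonal to an object $Z$ if $Z^f : Z^X \rightarrow Z^W$ is an isomorphism. *)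

Set Implicit Arguments.
Unset Strict Implicit.

Record Category := {
  Ob :> Type;
  Hom : Ob -> Ob -> Type;
  idm : forall A : Ob, Hom A A;
  comp : forall A B C : Ob, Hom B C -> Hom A B -> Hom A C;
  comp_id_l : forall A B (f : Hom A B), comp (idm B) f = f;
  comp_id_r : forall A B (f : Hom A B), comp f (idm A) = f;
  comp_assoc : forall A B C D (h : Hom C D) (g : Hom B C) (f : Hom A B),
      comp h (comp g f) = comp (comp h g) f
}.
Arguments Hom {c} _ _.
Arguments idm {c} _.
Arguments comp {c A B C} _ _.

Notation "g \o f" := (comp g f) (at level 40, left associativity).

Section Basic.
Context {C : Category}.

Definition is_iso {A B : C} (f : Hom A B) : Prop :=
  exists g : Hom B A, g \o f = idm A /\ f \o g = idm B.

Definition is_mono {A B : C} (f : Hom A B) : Prop :=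
  forall (Z : C) (a b : Hom Z A), f \o a = f \o b -> a = b.

Definition is_terminal (T : C) : Prop :=
  forall A : C, exists! h : Hom A T, True.

Definition is_product {A B P : C} (q1 : Hom P A) (q2 : Hom P B) : Prop :=
  forall (Z : C) (f : Hom Z A) (g : Hom Z B),
    exists! h : Hom Z P, q1 \o h = f /\ q2 \o h = g.

Definition is_pullback {A B X P : C} (f : Hom A X) (g : Hom B X)
    (p : Hom P A) (q : Hom P B) : Prop :=
  f \o p = g \o q /\
  forall (Z : C) (a : Hom Z A) (b : Hom Z B), f \o a = g \o b ->
    exists! h : Hom Z P, p \o h = a /\ q \o h = b.
End Basic.

Record Topos := {
  tcat :> Category;
  one : tcat;
  one_terminal : is_terminal one;
  prod : tcat -> tcat -> tcat;
  pr1 : forall A B : tcat, Hom (prod A B) A;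
  pr2 : forall A B : tcat, Hom (prod A B) B;
  prod_is_product : forall A B : tcat, is_product (pr1 A B) (pr2 A B);
  has_pullbacks : forall (A B X : tcat) (f : Hom A X) (g : Hom B X),
      exists (P : tcat) (p : Hom P A) (q : Hom P B), is_pullback f g p q;
  (* exp B Z is the exponential Z^B *)
  exp : tcat -> tcat -> tcat;
  ev : forall B Z : tcat, Hom (prod (exp B Z) B) Z;
  exp_universal : forall (A B Z : tcat) (g : Hom (prod A B) Z),
      exists! h : Hom A (exp B Z),
        forall (k : Hom (prod A B) (prod (exp B Z) B)),
          pr1 _ _ \o k = h \o pr1 _ _ -> pr2 _ _ \o k = pr2 _ _ ->
          ev B Z \o k = g;
  Omega : tcat;
  tru : Hom one Omega;
  classifier : forall (U X : tcat) (m : Hom U X), is_mono m ->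
      exists! chi : Hom X Omega,
        forall t : Hom U one, is_pullback chi tru m t
}.
Arguments one {t}.
Arguments prod {t} _ _.
Arguments pr1 {t} _ _.
Arguments pr2 {t} _ _.
Arguments exp {t} _ _.
Arguments ev {t} _ _.
Arguments Omega {t}.
Arguments tru {t}.

Record Functor (C D : Category) := {
  fobj :> C -> D;
  fmap : forall A B : C, Hom A B -> Hom (fobj A) (fobj B);
  fmap_id : forall A : C, fmap (idm A) = idm (fobj A);
  fmap_comp : forall A B X (g : Hom B X) (f : Hom A B),
      fmap (g \o f) = fmap g \o fmap f
}.
Arguments fmap {C D} _ {A B} _.

Record Adjunction {C D : Category} (F : Functor C D) (G : Functor D C) := {
  unit : forall A : C, Hom A (G (F A));
  counit : forall B : D, Hom (F (G B)) B;
  unit_nat : forall A A' (f : Hom A A'),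
      fmap G (fmap F f) \o unit A = unit A' \o f;
  counit_nat : forall B B' (g : Hom B B'),
      g \o counit B = counit B' \o fmap F (fmap G g);
  triangle_F : forall A : C, counit (F A) \o fmap F (unit A) = idm (F A);
  triangle_G : forall B : D, fmap G (counit B) \o unit (G B) = idm (G B)
}.
Arguments unit {C D F G} _ _.
Arguments counit {C D F G} _ _.

Definition fully_faithful {C D : Category} (F : Functor C D) : Prop :=
  forall A B : C,
    (forall f g : Hom A B, fmap F f = fmap F g -> f = g) /\
    (forall h : Hom (F A) (F B), exists f : Hom A B, fmap F f = h).

Definition preserves_terminal {C D : Category} (F : Functor C D) : Prop :=
  forall T : C, is_terminal T -> is_terminal (F T).

Definition preserves_binary_products {C D : Category} (F : Functor C D) : Prop :=
  forall (A B P : C) (q1 : Hom P A) (q2 : Hom P B),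
    is_product q1 q2 -> is_product (fmap F q1) (fmap F q2).

Definition preserves_finite_products {C D : Category} (F : Functor C D) : Prop :=
  preserves_terminal F /\ preserves_binary_products F.

Definition preserves_pullbacks {C D : Category} (F : Functor C D) : Prop :=
  forall (A B X P : C) (f : Hom A X) (g : Hom B X) (p : Hom P A) (q : Hom P B),
    is_pullback f g p q -> is_pullback (fmap F f) (fmap F g) (fmap F p) (fmap F q).

Definition left_exact {C D : Category} (F : Functor C D) : Prop :=
  preserves_terminal F /\ preserves_pullbacks F.

Definition pre_cohesive {E S : Topos}
    (pl : Functor E S) (pu : Functor S E) (ps : Functor E S) (pb : Functor S E)
    (a1 : Adjunction pl pu) (a2 : Adjunction pu ps) (a3 : Adjunction ps pb) : Prop :=
  (* geometric morphism: the inverse image p^* is left exact *)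
  left_exact pu /\
  (* local: p_* has a fully faithful right adjoint p^! *)
  fully_faithful pb /\
  (* hyperconnected: unit and counit of p^* -| p_* are monic *)
  (forall A : S, is_mono (unit a2 A)) /\
  (forall X : E, is_mono (counit a2 X)) /\
  preserves_finite_products pl.

Section Orth.
Context {T : Topos}.

(** [u : Z^X -> Z^W] is the map [Z^f] (precomposition with [f : W -> X]),
    i.e. the exponential transpose of
    [Z^X x W --(id x f)--> Z^X x X --ev--> Z].
    Here [k] ranges over (the unique) [u x id_W] and [l] over [id x f]. *)
Definition is_exp_precomp {W X : T} (Z : T) (f : Hom W X)
    (u : Hom (exp X Z) (exp W Z)) : Prop :=
  forall (k : Hom (prod (exp X Z) W) (prod (exp W Z) W))
         (l : Hom (prod (exp X Z) W) (prod (exp X Z) X)),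
    pr1 _ _ \o k = u \o pr1 _ _ -> pr2 _ _ \o k = pr2 _ _ ->
    pr1 _ _ \o l = pr1 _ _ -> pr2 _ _ \o l = f \o pr2 _ _ ->
    ev W Z \o k = ev X Z \o l.

Definition internally_orthogonal {W X : T} (f : Hom W X) (Z : T) : Prop :=
  exists u : Hom (exp X Z) (exp W Z), is_exp_precomp (Z:=Z) f u /\ is_iso u.
End Orth.

(* By Yoneda and the exponential adjunction, [f] is internally orthogonal to
   [Z] iff, for every [V], precomposition with [V × f] is a bijection on maps
   into [Z].  For [Z = p^* A] the adjunction [p_! ⊣ p^*] and the preservation
   of binary products by [p_!] turn this into: precomposition with
   [p_!V × p_!f] is a bijection on maps into [A].  This holds for every [A]
   when [p_!f] is invertible.  Conversely, take [A = Ω]: surjectivity for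
   [V = W] lets the classifying map of the diagonal of [p_!W] factor through
   [p_!W × p_!f], which forces [p_!f] to be monic; injectivity for [V = X]
   shows that the classifying map of [p_!f] is constantly true, so [p_!f] is
   invertible. *)

From Stdlib Require Import Setoid ClassicalEpsilon.

Section Bijections.
Context {C : Category}.

Definition precomp_bij {A B : C} (g : Hom A B) (Z : C) : Prop :=
  (forall psi psi' : Hom B Z, psi \o g = psi' \o g -> psi = psi') /\
  (forall kappa : Hom A Z, exists psi, psi \o g = kappa).

Definition postcomp_bij {P Q : C} (u : Hom P Q) (V : C) : Prop :=
  (forall h h' : Hom V P, u \o h = u \o h' -> h = h') /\
  (forall k : Hom V Q, exists h, u \o h = k).

Lemma iso_idm (A : C) : is_iso (idm A).
Proof. exists (idm A). split; apply comp_id_l. Qed.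

Lemma iso_precomp_bij {A B : C} (g : Hom A B) (Z : C) :
  is_iso g -> precomp_bij g Z.
Proof.
  intros [g' [Hg'g Hgg']]. split.
  - intros psi psi' Epsi.
    rewrite <- (comp_id_r psi), <- (comp_id_r psi'), <- Hgg', !comp_assoc, Epsi.
    reflexivity.
  - intro kappa. exists (kappa \o g').
    rewrite <- comp_assoc, Hg'g. apply comp_id_r.
Qed.

Lemma precomp_bij_comp {A B D : C} (g : Hom A B) (k : Hom B D) (Z : C) :
  precomp_bij g Z -> precomp_bij k Z -> precomp_bij (k \o g) Z.
Proof.
  intros [Ginj Gsurj] [Kinj Ksurj]. split.
  - intros psi psi' Epsi. apply Kinj, Ginj. rewrite <- !comp_assoc. exact Epsi.
  - intro kappa.
    destruct (Gsurj kappa) as [psi1 <-]. destruct (Ksurj psi1) as [psi <-].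
    exists psi. apply comp_assoc.
Qed.

Lemma precomp_bij_iso_l {A B D : C} (g : Hom A B) (k : Hom B D) (Z : C) :
  is_iso k -> precomp_bij (k \o g) Z <-> precomp_bij g Z.
Proof.
  intros Hk. split; intro Hg.
  - destruct Hk as [k' [Hk'k Hkk']].
    assert (Eg : g = k' \o (k \o g)) by (rewrite comp_assoc, Hk'k; symmetry; apply comp_id_l).
    rewrite Eg. apply precomp_bij_comp; [exact Hg |].
    apply iso_precomp_bij. exists k. split; assumption.
  - apply precomp_bij_comp; [exact Hg | apply iso_precomp_bij, Hk].
Qed.

Lemma precomp_bij_iso_r {A B D : C} (h : Hom A B) (g : Hom B D) (Z : C) :
  is_iso h -> precomp_bij (g \o h) Z <-> precomp_bij g Z.
Proof.
  intros Hh. split; intro Hg.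
  - destruct Hh as [h' [Hh'h Hhh']].
    assert (Eg : g = g \o h \o h') by (rewrite <- comp_assoc, Hhh'; symmetry; apply comp_id_r).
    rewrite Eg. apply precomp_bij_comp; [| exact Hg].
    apply iso_precomp_bij. exists h. split; assumption.
  - apply precomp_bij_comp; [apply iso_precomp_bij, Hh | exact Hg].
Qed.

Lemma precomp_bij_square {A B A' B' : C} (g : Hom A B) (g' : Hom A' B')
    (h : Hom A A') (k : Hom B B') (Z : C) :
  is_iso h -> is_iso k -> g' \o h = k \o g ->
  precomp_bij g Z <-> precomp_bij g' Z.
Proof.
  intros Hh Hk Esq.
  rewrite <- (precomp_bij_iso_l g k Z Hk), <- Esq. apply precomp_bij_iso_r, Hh.
Qed.

Lemma iso_postcomp_bij {P Q : C} (u : Hom P Q) :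
  is_iso u <-> forall V : C, postcomp_bij u V.
Proof.
  split.
  - intros [u' [Hu'u Huu']] V. split.
    + intros h h' Eh.
      rewrite <- (comp_id_l h), <- (comp_id_l h'), <- Hu'u, <- !comp_assoc, Eh.
      reflexivity.
    + intro k. exists (u' \o k). rewrite comp_assoc, Huu'. apply comp_id_l.
  - intro Hu. destruct (proj2 (Hu Q) (idm Q)) as [u' Huu'].
    exists u'. split; [| exact Huu'].
    apply (proj1 (Hu P)). rewrite comp_assoc, Huu', comp_id_l, comp_id_r.
    reflexivity.
Qed.

Lemma is_product_ext {A B P Z : C} {q1 : Hom P A} {q2 : Hom P B}
    (HP : is_product q1 q2) (h h' : Hom Z P) :
  q1 \o h = q1 \o h' -> q2 \o h = q2 \o h' -> h = h'.
Proof.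
  intros E1 E2. destruct (HP Z (q1 \o h) (q2 \o h)) as [x [_ Hx]].
  rewrite <- (Hx h (conj eq_refl eq_refl)), <- (Hx h' (conj (eq_sym E1) (eq_sym E2))).
  reflexivity.
Qed.

Lemma is_product_iso {A B P P' : C} {q1 : Hom P A} {q2 : Hom P B}
    {q1' : Hom P' A} {q2' : Hom P' B}
    (HP : is_product q1 q2) (HP' : is_product q1' q2') (h : Hom P P') :
  q1' \o h = q1 -> q2' \o h = q2 -> is_iso h.
Proof.
  intros E1 E2.
  destruct (HP P' q1' q2') as [h' [[E1' E2'] _]].
  exists h'. split.
  - apply (is_product_ext HP).
    + rewrite comp_assoc, E1', comp_id_r. exact E1.
    + rewrite comp_assoc, E2', comp_id_r. exact E2.
  - apply (is_product_ext HP').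
    + rewrite comp_assoc, E1, comp_id_r. exact E1'.
    + rewrite comp_assoc, E2, comp_id_r. exact E2'.
Qed.

End Bijections.

Section Transpose.
Context {C D : Category} {F : Functor C D} {G : Functor D C} (adj : Adjunction F G).

Definition transpose {A : C} {B : D} (phi : Hom A (G B)) : Hom (F A) B :=
  counit adj B \o fmap F phi.

Definition untranspose {A : C} {B : D} (psi : Hom (F A) B) : Hom A (G B) :=
  fmap G psi \o unit adj A.

Lemma transposeK {A : C} {B : D} (phi : Hom A (G B)) :
  untranspose (transpose phi) = phi.
Proof.
  unfold untranspose, transpose.
  rewrite fmap_comp, <- comp_assoc, unit_nat, comp_assoc, triangle_G.
  apply comp_id_l.
Qed.

Lemma untransposeK {A : C} {B : D} (psi : Hom (F A) B) :
  transpose (untranspose psi) = psi.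
Proof.
  unfold transpose, untranspose.
  rewrite fmap_comp, comp_assoc, <- counit_nat, <- comp_assoc, triangle_F.
  apply comp_id_r.
Qed.

Lemma untranspose_inj {A : C} {B : D} (psi psi' : Hom (F A) B) :
  untranspose psi = untranspose psi' -> psi = psi'.
Proof.
  intro Epsi. rewrite <- (untransposeK psi), <- (untransposeK psi'), Epsi.
  reflexivity.
Qed.

Lemma untranspose_natl {A A' : C} {B : D} (psi : Hom (F A') B) (k : Hom A A') :
  untranspose (psi \o fmap F k) = untranspose psi \o k.
Proof.
  unfold untranspose. rewrite fmap_comp, <- !comp_assoc, unit_nat. reflexivity.
Qed.

Lemma precomp_bij_adj {A A' : C} (g : Hom A A') (Z : D) :
  precomp_bij g (G Z) <-> precomp_bij (fmap F g) Z.
Proof.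
  split; intros [Hinj Hsurj]; split.
  - intros psi psi' Epsi. apply untranspose_inj, Hinj.
    rewrite <- !untranspose_natl, Epsi. reflexivity.
  - intro kappa. destruct (Hsurj (untranspose kappa)) as [phi Ephi].
    exists (transpose phi). apply untranspose_inj.
    rewrite untranspose_natl, transposeK. exact Ephi.
  - intros phi phi' Ephi.
    rewrite <- (transposeK phi), <- (transposeK phi'). f_equal.
    apply Hinj, untranspose_inj. rewrite !untranspose_natl, !transposeK. exact Ephi.
  - intro kappa. destruct (Hsurj (transpose kappa)) as [psi Epsi].
    exists (untranspose psi). rewrite <- untranspose_natl, Epsi. apply transposeK.
Qed.

End Transpose.

Section ToposStructure.
Context {T : Topos}.

Definition to_one (A : T) : Hom A one :=
  proj1_sig (constructive_indefinite_description _ (one_terminal A)).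

Lemma to_one_uniq (A : T) (h h' : Hom A one) : h = h'.
Proof.
  destruct (one_terminal A) as [x [_ Hx]].
  rewrite <- (Hx h I), <- (Hx h' I). reflexivity.
Qed.

Definition pairing {A B Z : T} (f : Hom Z A) (g : Hom Z B) : Hom Z (prod A B) :=
  proj1_sig (constructive_indefinite_description _ (prod_is_product f g)).

Lemma pr1_pairing {A B Z : T} (f : Hom Z A) (g : Hom Z B) : pr1 A B \o pairing f g = f.
Proof.
  exact (proj1 (proj1 (proj2_sig
    (constructive_indefinite_description _ (prod_is_product f g))))).
Qed.

Lemma pr2_pairing {A B Z : T} (f : Hom Z A) (g : Hom Z B) : pr2 A B \o pairing f g = g.
Proof.
  exact (proj2 (proj1 (proj2_sig
    (constructive_indefinite_description _ (prod_is_product f g))))).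
Qed.

Lemma prod_ext {A B Z : T} (h h' : Hom Z (prod A B)) :
  pr1 A B \o h = pr1 A B \o h' -> pr2 A B \o h = pr2 A B \o h' -> h = h'.
Proof. apply (is_product_ext (@prod_is_product T A B)). Qed.

Lemma pairing_comp {A B Z Y : T} (f : Hom Z A) (g : Hom Z B) (k : Hom Y Z) :
  pairing f g \o k = pairing (f \o k) (g \o k).
Proof.
  apply prod_ext; rewrite comp_assoc, ?pr1_pairing, ?pr2_pairing; reflexivity.
Qed.

Definition prodm {A A' B B' : T} (a : Hom A A') (b : Hom B B') :
  Hom (prod A B) (prod A' B') := pairing (a \o pr1 A B) (b \o pr2 A B).

Lemma pr1_prodm {A A' B B' : T} (a : Hom A A') (b : Hom B B') :
  pr1 A' B' \o prodm a b = a \o pr1 A B.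
Proof. apply pr1_pairing. Qed.

Lemma pr2_prodm {A A' B B' : T} (a : Hom A A') (b : Hom B B') :
  pr2 A' B' \o prodm a b = b \o pr2 A B.
Proof. apply pr2_pairing. Qed.

Lemma prodm_pairing {A A' B B' Z : T} (a : Hom A A') (b : Hom B B')
    (f : Hom Z A) (g : Hom Z B) :
  prodm a b \o pairing f g = pairing (a \o f) (b \o g).
Proof.
  apply prod_ext; rewrite comp_assoc, ?pr1_prodm, ?pr2_prodm, ?pr1_pairing,
    ?pr2_pairing, <- comp_assoc, ?pr1_pairing, ?pr2_pairing; reflexivity.
Qed.

Lemma prodm_comp {A A' A'' B B' B'' : T} (a : Hom A' A'') (b : Hom B' B'')
    (a' : Hom A A') (b' : Hom B B') :
  prodm a b \o prodm a' b' = prodm (a \o a') (b \o b').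
Proof.
  unfold prodm at 2. rewrite prodm_pairing, !comp_assoc. reflexivity.
Qed.

Lemma prodm_id (A B : T) : prodm (idm A) (idm B) = idm (prod A B).
Proof.
  apply prod_ext; rewrite ?pr1_prodm, ?pr2_prodm, comp_id_l, comp_id_r; reflexivity.
Qed.

Lemma prodm_iso {A A' B B' : T} (a : Hom A A') (b : Hom B B') :
  is_iso a -> is_iso b -> is_iso (prodm a b).
Proof.
  intros [a' [Ha'a Haa']] [b' [Hb'b Hbb']].
  exists (prodm a' b'). rewrite !prodm_comp, Ha'a, Haa', Hb'b, Hbb', !prodm_id.
  split; reflexivity.
Qed.

Definition curry {V B Z : T} (g : Hom (prod V B) Z) : Hom V (exp B Z) :=
  proj1_sig (constructive_indefinite_description _ (exp_universal g)).

Definition uncurry {V B Z : T} (h : Hom V (exp B Z)) : Hom (prod V B) Z :=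
  ev B Z \o prodm h (idm B).

Lemma curryK {V B Z : T} (g : Hom (prod V B) Z) : uncurry (curry g) = g.
Proof.
  destruct (proj2_sig (constructive_indefinite_description _ (exp_universal g)))
    as [Hev _].
  apply Hev; [apply pr1_prodm | rewrite pr2_prodm; apply comp_id_l].
Qed.

Lemma uncurryK {V B Z : T} (h : Hom V (exp B Z)) : curry (uncurry h) = h.
Proof.
  destruct (proj2_sig (constructive_indefinite_description _ (exp_universal (uncurry h))))
    as [_ Huniq].
  unfold curry. apply Huniq. intros k E1 E2.
  assert (Ek : k = prodm h (idm B)).
  { apply prod_ext; rewrite ?pr1_prodm, ?pr2_prodm, ?comp_id_l; assumption. }
  rewrite Ek. reflexivity.
Qed.

Lemma uncurry_inj {V B Z : T} (h h' : Hom V (exp B Z)) :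
  uncurry h = uncurry h' -> h = h'.
Proof. intro Eh. rewrite <- (uncurryK h), <- (uncurryK h'), Eh. reflexivity. Qed.

Lemma uncurry_comp {V V' B Z : T} (h : Hom V (exp B Z)) (k : Hom V' V) :
  uncurry (h \o k) = uncurry h \o prodm k (idm B).
Proof.
  unfold uncurry. rewrite <- comp_assoc, prodm_comp, comp_id_l. reflexivity.
Qed.

Definition precomp (Z : T) {W X : T} (f : Hom W X) : Hom (exp X Z) (exp W Z) :=
  curry (ev X Z \o prodm (idm (exp X Z)) f).

Lemma is_exp_precompE {W X : T} (Z : T) (f : Hom W X) (u : Hom (exp X Z) (exp W Z)) :
  is_exp_precomp f u <-> u = precomp Z f.
Proof.
  split.
  - intro Hu. rewrite <- (uncurryK u). unfold precomp, uncurry. f_equal. apply Hu.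
    + apply pr1_prodm.
    + rewrite pr2_prodm. apply comp_id_l.
    + rewrite pr1_prodm. apply comp_id_l.
    + apply pr2_prodm.
  - intros -> k l E1 E2 E3 E4.
    assert (Ek : k = prodm (precomp Z f) (idm W)).
    { apply prod_ext; rewrite ?pr1_prodm, ?pr2_prodm, ?comp_id_l; assumption. }
    assert (El : l = prodm (idm (exp X Z)) f).
    { apply prod_ext; rewrite ?pr1_prodm, ?pr2_prodm, ?comp_id_l; assumption. }
    rewrite Ek, El. apply curryK.
Qed.

Lemma uncurry_precomp {V W X : T} (Z : T) (f : Hom W X) (h : Hom V (exp X Z)) :
  uncurry (precomp Z f \o h) = uncurry h \o prodm (idm V) f.
Proof.
  rewrite uncurry_comp. unfold precomp. rewrite curryK. unfold uncurry.
  rewrite <- !comp_assoc, !prodm_comp, !comp_id_l, !comp_id_r. reflexivity.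
Qed.

Lemma internally_orthogonal_precomp {W X : T} (f : Hom W X) (Z : T) :
  internally_orthogonal f Z <-> is_iso (precomp Z f).
Proof.
  split.
  - intros [u [Hu Hiso]]. apply is_exp_precompE in Hu. subst u. exact Hiso.
  - intro Hiso. exists (precomp Z f).
    split; [apply is_exp_precompE; reflexivity | exact Hiso].
Qed.

Lemma postcomp_precomp_bij {W X : T} (f : Hom W X) (Z V : T) :
  postcomp_bij (precomp Z f) V <-> precomp_bij (prodm (idm V) f) Z.
Proof.
  split; intros [Hinj Hsurj]; split.
  - intros psi psi' Epsi.
    rewrite <- (curryK psi), <- (curryK psi'). f_equal.
    apply Hinj, uncurry_inj. rewrite !uncurry_precomp, !curryK. exact Epsi.
  - intro kappa. destruct (Hsurj (curry kappa)) as [h Eh].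
    exists (uncurry h). rewrite <- uncurry_precomp, Eh. apply curryK.
  - intros h h' Eh. apply uncurry_inj, Hinj.
    rewrite <- !uncurry_precomp, Eh. reflexivity.
  - intro k. destruct (Hsurj (uncurry k)) as [psi Epsi].
    exists (curry psi). apply uncurry_inj.
    rewrite uncurry_precomp, curryK. exact Epsi.
Qed.

Lemma internally_orthogonalP {W X : T} (f : Hom W X) (Z : T) :
  internally_orthogonal f Z <-> forall V : T, precomp_bij (prodm (idm V) f) Z.
Proof.
  rewrite internally_orthogonal_precomp, iso_postcomp_bij.
  split; intros H V; apply postcomp_precomp_bij, H.
Qed.

Lemma diag_mono (A : T) : is_mono (pairing (idm A) (idm A)).
Proof.
  intros Y a b Eab.
  rewrite <- (comp_id_l a), <- (comp_id_l b), <- (pr1_pairing (idm A) (idm A)),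
    <- !comp_assoc, Eab.
  reflexivity.
Qed.

Lemma mono_of_precomp_surj_Omega {A B : T} (g : Hom A B) :
  (forall chi : Hom (prod A A) Omega, exists psi, psi \o prodm (idm A) g = chi) ->
  is_mono g.
Proof.
  intros Hsurj Y a b Eab.
  destruct (classifier (diag_mono A)) as [chi [Hchi _]].
  destruct (Hchi (to_one A)) as [Hcomm Hpb].
  destruct (Hsurj chi) as [psi <-].
  assert (Ed : prodm (idm A) g \o pairing a b = prodm (idm A) g \o (pairing (idm A) (idm A) \o a)).
  { rewrite pairing_comp, !prodm_pairing, !comp_id_l, Eab. reflexivity. }
  assert (Hc : psi \o prodm (idm A) g \o pairing a b = tru \o (to_one A \o a)).
  { rewrite <- comp_assoc, Ed, !comp_assoc, Hcomm. reflexivity. }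
  destruct (Hpb Y (pairing a b) (to_one A \o a) Hc) as [c [[Hdc _] _]].
  assert (Ha : a = c).
  { rewrite <- (pr1_pairing a b), <- Hdc.
    rewrite comp_assoc, pr1_pairing. apply comp_id_l. }
  assert (Hb : b = c).
  { rewrite <- (pr2_pairing a b), <- Hdc.
    rewrite comp_assoc, pr2_pairing. apply comp_id_l. }
  rewrite Ha, Hb. reflexivity.
Qed.

Lemma iso_of_mono_precomp_inj_Omega {A B : T} (g : Hom A B) :
  is_mono g ->
  (forall psi psi' : Hom (prod B B) Omega,
      psi \o prodm (idm B) g = psi' \o prodm (idm B) g -> psi = psi') ->
  is_iso g.
Proof.
  intros Hmono Hinj.
  destruct (classifier Hmono) as [chi [Hchi _]].
  destruct (Hchi (to_one A)) as [Hcomm Hpb].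
  assert (Hpr2 : chi \o pr2 B B = tru \o to_one (prod B B)).
  { apply Hinj. rewrite <- comp_assoc, pr2_prodm, comp_assoc, Hcomm.
    rewrite <- !comp_assoc. f_equal. apply to_one_uniq. }
  assert (Echi : chi \o idm B = tru \o to_one B).
  { rewrite <- (pr2_pairing (idm B) (idm B)), comp_assoc, Hpr2, <- comp_assoc.
    f_equal. apply to_one_uniq. }
  destruct (Hpb B (idm B) (to_one B) Echi) as [h [[Egh _] _]].
  exists h. split; [| exact Egh].
  apply Hmono. rewrite comp_assoc, Egh, comp_id_l, comp_id_r. reflexivity.
Qed.

Lemma iso_of_precomp_bij_Omega {A B : T} (g : Hom A B) :
  precomp_bij (prodm (idm A) g) Omega -> precomp_bij (prodm (idm B) g) Omega ->
  is_iso g.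
Proof.
  intros [_ Hsurj] [Hinj _].
  apply iso_of_mono_precomp_inj_Omega; [apply mono_of_precomp_surj_Omega |]; assumption.
Qed.

End ToposStructure.

Section ProductComparison.
Context {E S : Topos} (F : Functor E S).

Definition prod_cmp (V X : E) : Hom (F (prod V X)) (prod (F V) (F X)) :=
  pairing (fmap F (pr1 V X)) (fmap F (pr2 V X)).

Lemma prod_cmp_natural {V V' X X' : E} (a : Hom V V') (b : Hom X X') :
  prod_cmp V' X' \o fmap F (prodm a b) = prodm (fmap F a) (fmap F b) \o prod_cmp V X.
Proof.
  unfold prod_cmp.
  rewrite pairing_comp, prodm_pairing, <- !fmap_comp, pr1_prodm, pr2_prodm.
  reflexivity.
Qed.

Lemma prod_cmp_iso (HF : preserves_binary_products F) (V X : E) :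
  is_iso (prod_cmp V X).
Proof.
  apply (is_product_iso (HF _ _ _ _ _ (@prod_is_product E V X))
                        (@prod_is_product S (F V) (F X)));
    [apply pr1_pairing | apply pr2_pairing].
Qed.

End ProductComparison.

Lemma internally_orthogonal_ladj {E S : Topos} {F : Functor E S} {G : Functor S E}
    (adj : Adjunction F G) (HF : preserves_binary_products F)
    {W X : E} (f : Hom W X) (Z : S) :
  internally_orthogonal f (G Z) <->
  forall V : E, precomp_bij (prodm (idm (F V)) (fmap F f)) Z.
Proof.
  assert (Hsq : forall V : E, precomp_bij (prodm (idm V) f) (G Z) <->
                              precomp_bij (prodm (idm (F V)) (fmap F f)) Z).
  { intro V. rewrite (precomp_bij_adj adj).
    apply precomp_bij_square with (h := prod_cmp F V W) (k := prod_cmp F V X);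
      [apply prod_cmp_iso, HF | apply prod_cmp_iso, HF |].
    rewrite prod_cmp_natural, fmap_id. reflexivity. }
  rewrite internally_orthogonalP.
  split; intros H V; apply Hsq, H.
Qed.

Theorem lemma3p1 (S E : Topos)
    (pl : Functor E S) (pu : Functor S E) (ps : Functor E S) (pb : Functor S E)
    (a1 : Adjunction pl pu) (a2 : Adjunction pu ps) (a3 : Adjunction ps pb)
    (Hp : pre_cohesive a1 a2 a3)
    (W X : E) (f : Hom W X) :
  (internally_orthogonal f (pu (@Omega S)) <-> is_iso (fmap pl f)) /\
  (is_iso (fmap pl f) <-> (forall A : S, internally_orthogonal f (pu A))).
Proof.
  destruct Hp as (_ & _ & _ & _ & _ & Hprod).
  assert (Hiso_orth : is_iso (fmap pl f) -> forall A : S, internally_orthogonal f (pu A)).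
  { intros Hf A. apply (internally_orthogonal_ladj a1 Hprod). intro V.
    apply iso_precomp_bij, prodm_iso; [apply iso_idm | exact Hf]. }
  assert (Horth_iso : internally_orthogonal f (pu (@Omega S)) -> is_iso (fmap pl f)).
  { rewrite (internally_orthogonal_ladj a1 Hprod). intro H.
    apply iso_of_precomp_bij_Omega; [apply (H W) | apply (H X)]. }
  split; split.
  - exact Horth_iso.
  - intro Hf. exact (Hiso_orth Hf Omega).
  - exact Hiso_orth.
  - intro H. exact (Horth_iso (H Omega)).
Qed.
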